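(* Let $G_1$ be a graph on $n$ nodes with Laplacian $Q_1$, and for $p\ge 0$ let $$Q(p)=\begin{bmatrix} Q_1+p(n-1)I & -p(J-I)\\ -p(J-I) & Q_1+p(n-1)I\end{bmatrix},$$ where $J$ is the $n\times n$ all-one matrix (two copies of $G_1$ coupled by an $(n-1)$-to-$(n-1)$ interconnection $B=p(J-I)$), with eigenvalues $0=\mu_N(p)\le\mu_{N-1}(p)\le\dots\le\mu_1(p)$, $N=2n$. Define $p^*=\sup\big(\{0\}\cup\{p>0:\ \mu_{N-1}(p)=2(n-1)p\}\big)$. Then $$p^*=\frac{\mu_{n-1}(Q_1)}{n},$$ where $\mu_{n-1}(Q_1)$ is the second smallest eigenvalue of $Q_1$.
   Context: $2(n-1)p$ is an eigenvalue of $Q(p)$ with eigenvector $[u^T,-u^T]^T$, $u$ the all-one vector; $p^*$ is the structural transition threshold, described in the paper as the coupling beyond which the algebraic connectivity $\mu_{N-1}$ no longer equals $2(n-1)p$ (formalized here as the supremum). *)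

From HB Require Import structures.
From mathcomp Require Import all_boot all_order all_algebra.
From mathcomp Require Import boolp classical_sets reals.
Set Implicit Arguments. Unset Strict Implicit. Unset Printing Implicit Defensive.
Import Order.TTheory GRing.Theory Num.Theory.
Local Open Scope ring_scope.

Definition laplacian (R : realType) (n : nat) (adj : rel 'I_n) : 'M[R]_n :=
  \matrix_(i, j) (if i == j then (#|[set k | adj i k]|)%:R
                  else if adj i j then -1 else 0).

(* The eigenvalues of a square matrix, listed in ascending order with
   multiplicity: the (unique) nondecreasing sequence s whose linear factors
   multiply to the characteristic polynomial.  (For a real symmetric matrix
   such a sequence exists.) *)
Definition eig_asc_seq (R : realType) (N : nat) (M : 'M[R]_N) : seq R :=
  xget [::] [set s : seq R | sorted <=%R s /\
                             char_poly M = \prod_(a <- s) ('X - a%:P)].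

(* [eig_asc M k] is the (k+1)-th smallest eigenvalue of M; so with the paper's
   descending indexing mu_N <= mu_{N-1} <= ..., mu_{N-1} = eig_asc M 1. *)
Definition eig_asc (R : realType) (N : nat) (M : 'M[R]_N) (k : nat) : R :=
  nth 0 (eig_asc_seq M) k.

Definition allone (R : realType) (n : nat) : 'M[R]_n := const_mx 1.

Definition Qp (R : realType) (n : nat) (Q1 : 'M[R]_n) (p : R) : 'M[R]_(n + n) :=
  let D := Q1 + (p * (n.-1)%:R)%:M in
  let B := p *: (allone R n - 1%:M) in
  block_mx D (- B) (- B) D.

Definition pstar (R : realType) (n : nat) (Q1 : 'M[R]_n) : R :=
  sup ([set 0] `|` [set p : R | 0 < p /\
                     eig_asc (Qp Q1 p) 1 = 2 * (n.-1)%:R * p])%classic.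

(* Let u be the all-ones vector, so that Q1 u = 0.  On block vectors [x; x] and
   [x; -x] the matrix Q(p) acts as Q1 - pJ + pnI and Q1 + pJ + p(n-2)I, so its
   characteristic polynomial is the product of theirs.  Both have u as an
   eigenvector (eigenvalues 0 and 2(n-1)p), and deflating u leaves the same
   matrix as for Q1, shifted by pn and p(n-2) respectively.  Hence, if s is the
   spectrum of Q1 with one zero removed (nonnegative, with minimum
   mu_{n-1}(Q1)), the spectrum of Q(p) is {0, 2(n-1)p} U (s + pn) U (s + p(n-2)),
   whose second smallest element equals 2(n-1)p exactly when
   pn <= mu_{n-1}(Q1). *)

From HB Require Import structures.
From mathcomp Require Import all_boot all_order all_algebra.
From mathcomp Require Import boolp classical_sets reals.
From mathcomp Require Import ring.
Set Implicit Arguments. Unset Strict Implicit. Unset Printing Implicit Defensive.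
Import Order.TTheory GRing.Theory Num.Theory.
Local Open Scope ring_scope.

Lemma horner_char_poly (R : comNzRingType) n (M : 'M[R]_n) x :
  (char_poly M).[x] = \det (x%:M - M).
Proof.
rewrite /char_poly -horner_evalE -det_map_mx; congr (\det _).
apply/matrixP=> i j; rewrite !mxE /= horner_evalE.
by rewrite hornerD hornerN hornerMn hornerX hornerC.
Qed.

Lemma eq_poly_horner (R : numDomainType) (p q : {poly R}) :
  (forall x, p.[x] = q.[x]) -> p = q.
Proof.
move=> pq; apply/eqP; rewrite -subr_eq0; apply/eqP.
apply: (@roots_geq_poly_eq0 _ _ [seq i%:R | i <- iota 0 (size (p - q))]).
- by apply/allP => y _; rewrite /root hornerD hornerN pq subrr.
- by rewrite map_inj_uniq ?iota_uniq // => a b /eqP; rewrite eqr_nat => /eqP.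
- by rewrite size_map size_iota.
Qed.

Lemma det_block_mx_sym (R : comPzRingType) k (A C : 'M[R]_k) :
  \det (block_mx A C C A) = \det (A + C) * \det (A - C).
Proof.
have rowop : block_mx 1 1 0 1 *m block_mx A C C A *m block_mx 1 (-1) 0 1
           = block_mx (A + C) 0 C (A - C).
  rewrite !mulmx_block !mulmx1 !mul1mx !mul0mx !mulmx0 !addr0 !add0r !mulmxN !mulmx1.
  by rewrite [C + A]addrC addNr [- C + A]addrC.
have := congr1 determinant rowop.
by rewrite !det_mulmx !det_ublock !det1 !mulr1 mul1r det_lblock.
Qed.

(* In a basis whose first vector is the all-ones vector u, a matrix having u as
   an eigenvector is block upper triangular; [deflate M] is its lower-right
   block, so it carries the rest of the spectrum of M. *)
Definition deflate (R : pzRingType) m (M : 'M[R]_(1 + m)) : 'M[R]_m :=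
  drsubmx M - const_mx 1 *m ursubmx M.

Section Deflation.
Variables (R : comPzRingType) (m : nat).
Implicit Types (M : 'M[R]_(1 + m)) (lam x : R).

Lemma deflate_similar M lam :
  M *m (const_mx 1 : 'cV_(1 + m)) = lam *: const_mx 1 ->
  block_mx 1 0 (- const_mx 1) 1 *m M *m block_mx 1 0 (const_mx 1) 1
  = block_mx lam%:M (ursubmx M) 0 (deflate M).
Proof.
have one1 : const_mx 1 = 1 :> 'M[R]_1 by apply/matrixP => i j; rewrite !mxE !ord1.
rewrite -[M]submxK -!col_mx_const mul_block_col scale_col_mx one1 !mulmx1 scalemx1.
move=> /eq_col_mx[eq_u eq_d]; rewrite /deflate block_mxKur block_mxKdr.
rewrite -mulmxA mulmx_block !mulmx0 !mulmx1 !add0r eq_u eq_d.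
rewrite mulmx_block !mul0mx !mul1mx !addr0 !mulNmx mul_mx_scalar.
by rewrite addNr addrC.
Qed.

Lemma det_deflate M lam x :
  M *m (const_mx 1 : 'cV_(1 + m)) = lam *: const_mx 1 ->
  \det (x%:M - M) = (x - lam) * \det (x%:M - deflate M).
Proof.
move=> /deflate_similar similar.
have S'S : block_mx 1 0 (- const_mx 1) 1 *m block_mx 1 0 (const_mx 1) 1 = 1
    :> 'M[R]_(1 + m).
  rewrite mulmx_block !mulmx0 !mulmx1 !mul0mx !mul1mx !addr0 addNr add0r.
  by rewrite -(scalar_mx_block 1 m 1).
have det_lunit (N : 'M[R]_(m, 1)) : \det (block_mx 1 0 N 1) = 1.
  by rewrite det_lblock !det1 mulr1.
rewrite -[LHS]mul1r -[LHS]mulr1 -{1}(det_lunit (- const_mx 1)).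
rewrite -{2}(det_lunit (const_mx 1)) -!det_mulmx.
rewrite mulmxBr mulmxBl mul_mx_scalar -scalemxAl S'S similar scalemx1.
rewrite (scalar_mx_block 1 m x) opp_block_mx add_block_mx oppr0 addr0 det_ublock.
by rewrite -raddfB det_scalar1.
Qed.

Lemma deflate_shift M c a :
  deflate (M + c *: const_mx 1 + a%:M) = deflate M + a%:M.
Proof.
have J_block : const_mx 1 = block_mx (const_mx 1) (const_mx 1) (const_mx 1)
                                     (const_mx 1) :> 'M[R]_(1 + m).
  by rewrite block_mxEv !row_mx_const col_mx_const.
have J_mul : (const_mx 1 : 'cV[R]_m) *m (const_mx 1 : 'rV_m) = const_mx 1.
  by apply/matrixP => i j; rewrite !mxE big_ord1 !mxE mulr1.
rewrite /deflate -[M]submxK J_block (scalar_mx_block 1 m a) scale_block_mx.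
rewrite !add_block_mx !block_mxKdr !block_mxKur addr0 mulmxDr -scalemxAr J_mul.
by rewrite opprD addrAC addrACA subrr addr0.
Qed.

Lemma mulmx_const_shift M lam c a :
  M *m (const_mx 1 : 'cV_(1 + m)) = lam *: const_mx 1 ->
  (M + c *: const_mx 1 + a%:M) *m (const_mx 1 : 'cV_(1 + m))
  = (lam + c * (1 + m)%:R + a) *: const_mx 1.
Proof.
move=> eigM; rewrite !mulmxDl eigM mul_scalar_mx -scalemxAl !scalerDl -scalerA.
congr (_ + _ *: _ + _); apply/matrixP => i j; rewrite !mxE.
under eq_bigr do rewrite !mxE mulr1.
by rewrite sumr_const card_ord mulr1.
Qed.

End Deflation.

Section CharPoly.
Variable R : numDomainType.

Lemma char_poly_deflate m (M : 'M[R]_(1 + m)) lam :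
  M *m (const_mx 1 : 'cV_(1 + m)) = lam *: const_mx 1 ->
  char_poly M = ('X - lam%:P) * char_poly (deflate M).
Proof.
move=> eigM; apply: eq_poly_horner => x.
by rewrite hornerM hornerXsubC !horner_char_poly (det_deflate _ eigM).
Qed.

Lemma char_poly_block_sym k (D B : 'M[R]_k) :
  char_poly (block_mx D (- B) (- B) D) = char_poly (D - B) * char_poly (D + B).
Proof.
apply: eq_poly_horner => x; rewrite hornerM !horner_char_poly.
rewrite (scalar_mx_block k k x) opp_block_mx add_block_mx !opprK !add0r.
by rewrite det_block_mx_sym opprB addrA addrAC opprD addrA.
Qed.

Lemma char_poly_shift k (B : 'M[R]_k) c t :
  char_poly B = \prod_(a <- t) ('X - a%:P) ->
  char_poly (B + c%:M) = \prod_(a <- [seq y + c | y <- t]) ('X - a%:P).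
Proof.
move=> charB; apply: eq_poly_horner => x; rewrite horner_char_poly.
have -> : x%:M - (B + c%:M) = (x - c)%:M - B by rewrite raddfB opprD addrAC addrA.
rewrite -horner_char_poly charB !horner_prod big_map.
by apply: eq_bigr => a _; rewrite !hornerXsubC opprD addrA addrAC.
Qed.

End CharPoly.

Definition splits (R : nzRingType) (P : {poly R}) : Prop :=
  exists s : seq R, P = \prod_(a <- s) ('X - a%:P).

Lemma splits_dvdp (R : idomainType) (P S : {poly R}) :
  P \is monic -> P %| S -> splits S -> splits P.
Proof.
move=> monP dvdPS [s defS]; move: dvdPS; rewrite defS.
move=> /(@dvdp_prod_XsubC _ _ s id)[ms eqP_ms]; exists (mask ms s).
by apply/eqP; rewrite -eqp_monic // monic_prod_XsubC.
Qed.

Lemma splits_char_poly_shift (R : numDomainType) k (B : 'M[R]_k) c :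
  splits (char_poly (B + c%:M)) -> splits (char_poly B).
Proof.
move=> [s /(char_poly_shift (- c))]; rewrite raddfN addrK => charB.
by exists [seq y - c | y <- s].
Qed.

Lemma sorted_perm_nth1 (R : realDomainType) (l r : seq R) x :
  sorted <=%R l -> perm_eq l (x :: r) -> {in r, forall y, x <= y} -> r != [::] ->
  nth 0 l 1 \in r /\ {in r, forall y, nth 0 l 1 <= y}.
Proof.
case: l => [|y0 l] sorted_l perm_l min_x r_nil; first by have := perm_size perm_l.
have y0_min z : z \in y0 :: l -> y0 <= z.
  rewrite inE => /predU1P[->//|z_l].
  by have /allP := order_path_min (@le_trans _ R) sorted_l; apply.
have y0x : y0 = x.
  apply/le_anti; rewrite y0_min ?(perm_mem perm_l) ?mem_head //=.
  have : y0 \in x :: r by rewrite -(perm_mem perm_l) mem_head.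
  by rewrite inE => /predU1P[->//|/min_x].
rewrite {}y0x perm_cons in perm_l sorted_l.
case: l sorted_l perm_l {y0_min} => [|y1 l] sorted_l perm_l.
  by move: r_nil; rewrite perm_sym in perm_l; rewrite (perm_nilP perm_l).
split=> [|z]; first by rewrite -(perm_mem perm_l) mem_head.
rewrite -(perm_mem perm_l) inE => /predU1P[->//|z_l] /=.
by have /allP := order_path_min (@le_trans _ R) (path_sorted sorted_l); apply.
Qed.

Section EigAsc.
Variables (R : realType) (N : nat) (M : 'M[R]_N).

Lemma eig_asc_seqP s : char_poly M = \prod_(a <- s) ('X - a%:P) ->
  sorted <=%R (eig_asc_seq M) /\ perm_eq (eig_asc_seq M) s.
Proof.
move=> charM.
have [sorted_e char_e] : sorted <=%R (eig_asc_seq M) /\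
    char_poly M = \prod_(a <- eig_asc_seq M) ('X - a%:P).
  apply: (@xgetI _ [::] [set s | sorted <=%R s /\
            char_poly M = \prod_(a <- s) ('X - a%:P)]%classic (sort <=%R s)).
  split; first exact: (sort_sorted (@le_total _ R)).
  by rewrite charM; apply: perm_big; rewrite perm_sym perm_sort.
by split; last by apply: prod_XsubC_eq; rewrite -char_e.
Qed.

Lemma eig_asc_nosplit k : ~ splits (char_poly M) -> eig_asc M k = 0.
Proof.
move=> nosplit; rewrite /eig_asc /eig_asc_seq xgetPN ?nth_nil // => s [_ charM].
by apply: nosplit; exists s.
Qed.

Lemma eig_asc_ge0 k : (forall lam, root (char_poly M) lam -> 0 <= lam) ->
  0 <= eig_asc M k.
Proof.
move=> roots_ge0.
have [[s charM]|nosplit] := pselect (splits (char_poly M)); last first.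
  by rewrite eig_asc_nosplit.
have [_ perm_e] := eig_asc_seqP charM.
rewrite /eig_asc; have [ge_k|lt_k] := leqP (size (eig_asc_seq M)) k.
  by rewrite nth_default.
apply: roots_ge0; rewrite charM root_prod_XsubC -(perm_mem perm_e).
exact: mem_nth.
Qed.

Lemma eig_asc1_min x r : char_poly M = \prod_(a <- x :: r) ('X - a%:P) ->
  {in r, forall y, x <= y} -> r != [::] ->
  eig_asc M 1 \in r /\ {in r, forall y, eig_asc M 1 <= y}.
Proof.
move=> /eig_asc_seqP[sorted_e perm_e]; exact: sorted_perm_nth1.
Qed.

End EigAsc.

Lemma sup_threshold (R : realType) (P : R -> Prop) a : 0 <= a ->
  (forall p, 0 < p -> P p <-> p <= a) ->
  sup ([set 0] `|` [set p | 0 < p /\ P p])%classic = a.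
Proof.
move=> a_ge0 P_le; set S := (_ `|` _)%classic.
have S_ub : ubound S a by move=> q /= [->|[q_gt0 /(P_le _ q_gt0)]].
have S_a : S a.
  have [->|a_neq0] := eqVneq a 0; [by left | right].
  have a_gt0 : 0 < a by rewrite lt_neqAle eq_sym a_neq0.
  by split; last exact/(P_le _ a_gt0).
apply/le_anti; rewrite ge_sup //=; last by exists a.
by apply: (sup_upper_bound _ S_a); split; [exists a | exists a].
Qed.

Section Laplacian.
Variables (R : realType) (n : nat) (adj : rel 'I_n).
Hypotheses (adj_sym : symmetric adj) (adj_irr : irreflexive adj).
Local Notation L := (laplacian R adj).

Lemma laplacian_sym i j : L i j = L j i.
Proof. by rewrite !mxE eq_sym adj_sym; case: eqP => // ->. Qed.

Lemma sum_laplacian_row i (v : 'I_n -> R) :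
  \sum_j v j * L i j
  = v i * #|[set k | adj i k]|%:R - \sum_(j in [set k | adj i k]) v j.
Proof.
rewrite (bigD1 i) //= mxE eqxx; congr (_ + _).
rewrite -sumrN [LHS]big_mkcond [RHS]big_mkcond /=; apply: eq_bigr => j _.
rewrite mxE inE; case: eqVneq => [->|ji] /=; first by rewrite adj_irr.
by case: (adj i j); rewrite ?mulrN1 ?mulr0.
Qed.

Lemma laplacian_mul_ones : L *m (const_mx 1 : 'cV_n) = 0.
Proof.
apply/matrixP => i k; rewrite !mxE.
under eq_bigr do rewrite [const_mx 1 _ _]mxE mulr1 -[L i _]mul1r.
by rewrite sum_laplacian_row mul1r sumr_const subrr.
Qed.

Lemma laplacian_eig_ge0 lam : root (char_poly L) lam -> 0 <= lam.
Proof.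
rewrite -eigenvalue_root_char => /eigenvalueP [v eig_v v_neq0].
have [i0 v_i0] : exists i, v 0 i != 0.
  apply/existsP; apply: contraR v_neq0 => /existsPn v0; apply/eqP/rowP => i.
  by rewrite mxE; apply/eqP; rewrite -[_ == _]negbK v0.
have [j _ jmax] := @Order.TotalTheory.arg_maxP _ R 'I_n i0 xpredT (fun j => `|v 0 j|) isT.
have vj_gt0 : 0 < `|v 0 j| by apply: lt_le_trans (jmax i0 isT); rewrite normr_gt0.
have := congr1 (fun w : 'rV[R]_n => w 0 j) eig_v; rewrite !mxE.
under eq_bigr do rewrite laplacian_sym.
rewrite sum_laplacian_row => eq_j; set d := #|[set k | adj j k]|.
have nbr_le : `|\sum_(i in [set k | adj j k]) v 0 i| <= `|v 0 j| * d%:R.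
  apply: le_trans (ler_norm_sum _ _ _) _.
  apply: le_trans (ler_sum _ (fun i _ => jmax i isT)) _.
  by rewrite sumr_const mulr_natr.
have : `|lam - d%:R| * `|v 0 j| <= d%:R * `|v 0 j|.
  rewrite -normrM mulrBl -eq_j mulrC [d%:R * _]mulrC.
  by rewrite addrAC subrr add0r normrN.
rewrite ler_pM2r // => /ler_normlP [lam_ge _].
by move: lam_ge; rewrite opprB lerBlDr lerDl.
Qed.

End Laplacian.

Section Coupling.
Variables (R : realType) (m : nat) (Q : 'M[R]_(1 + m.+1)).
Hypothesis Q_ones : Q *m (const_mx 1 : 'cV_(1 + m.+1)) = 0 *: const_mx 1.
Hypothesis Q_eig_ge0 : forall lam, root (char_poly Q) lam -> 0 <= lam.

Lemma char_poly_Q : char_poly Q = 'X * char_poly (deflate Q).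
Proof. by rewrite (char_poly_deflate Q_ones) subr0. Qed.

Lemma char_poly_Qp p :
  char_poly (Qp Q p) =
  'X * char_poly (deflate Q + (p * m.+2%:R)%:M) *
  (('X - (2 * m.+1%:R * p)%:P) * char_poly (deflate Q + (p * m%:R)%:M)).
Proof.
rewrite /Qp char_poly_block_sym.
set J := allone R _; set B := p *: _; set D := Q + _.
have -> : D - B = Q + (- p) *: J + (p * m.+2%:R)%:M.
  by apply/matrixP => i j; rewrite !mxE; case: (i == j) => /=; ring.
have -> : D + B = Q + p *: J + (p * m%:R)%:M.
  by apply/matrixP => i j; rewrite !mxE; case: (i == j) => /=; ring.
rewrite !(char_poly_deflate (mulmx_const_shift _ _ Q_ones)) !deflate_shift.
have -> : 0 + - p * (1 + m.+1)%:R + p * m.+2%:R = 0 by ring.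
have -> : 0 + p * (1 + m.+1)%:R + p * m%:R = 2 * m.+1%:R * p by ring.
by rewrite subr0.
Qed.

Section SplitSpectrum.
Variable t : seq R.
Hypothesis char_deflate : char_poly (deflate Q) = \prod_(a <- t) ('X - a%:P).

Lemma spectrum_deflate_ge0 : {in t, forall y, 0 <= y}.
Proof.
move=> y y_t; apply: Q_eig_ge0.
by rewrite char_poly_Q rootM char_deflate root_prod_XsubC y_t orbT.
Qed.

Lemma spectrum_deflate_neq0 : t != [::].
Proof.
by have := size_char_poly (deflate Q); rewrite char_deflate size_prod_XsubC; case: t.
Qed.

Lemma eig_asc1_Q : eig_asc Q 1 \in t /\ {in t, forall y, eig_asc Q 1 <= y}.
Proof.
apply: eig_asc1_min spectrum_deflate_ge0 spectrum_deflate_neq0.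
by rewrite char_poly_Q char_deflate big_cons subr0.
Qed.

Lemma Qp_threshold_split (p : R) : 0 < p ->
  eig_asc (Qp Q p) 1 = 2 * m.+1%:R * p <-> p * m.+2%:R <= eig_asc Q 1.
Proof.
move=> p_gt0; have [e_t e_min] := eig_asc1_Q; set e := eig_asc Q 1 in e_t e_min *.
set c1 := p * m.+2%:R; set c2 := p * m%:R; set a := 2 * m.+1%:R * p.
have a_c : a = c1 + c2 by rewrite /a /c1 /c2; ring.
have c2_ge0 : 0 <= c2 by apply: mulr_ge0; [exact: ltW | exact: ler0n].
have c21 : c2 <= c1 by rewrite /c1 /c2 ler_pM2l // ler_nat leqW.
have c1_ge0 := le_trans c2_ge0 c21.
set r := a :: [seq y + c1 | y <- t] ++ [seq y + c2 | y <- t].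
have r_ge0 : {in r, forall y, 0 <= y}.
  move=> y; rewrite inE mem_cat => /orP[/eqP->|/orP[]/mapP[z z_t ->]].
  - by rewrite a_c addr_ge0.
  - by rewrite addr_ge0 // spectrum_deflate_ge0.
  - by rewrite addr_ge0 // spectrum_deflate_ge0.
have [f_r f_min] :
    eig_asc (Qp Q p) 1 \in r /\ {in r, forall y, eig_asc (Qp Q p) 1 <= y}.
  apply: eig_asc1_min r_ge0 isT.
  rewrite char_poly_Qp !(char_poly_shift _ char_deflate) !big_cons big_cat /= subr0.
  by rewrite -mulrA; congr (_ * _); exact: mulrCA.
split=> [f_a|c1_e].
  have := f_min (e + c2); rewrite f_a inE mem_cat (map_f (fun y => y + c2) e_t).
  by rewrite !orbT a_c lerD2r => /(_ isT).
apply: le_anti; rewrite f_min ?mem_head //=.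
move: f_r; rewrite inE mem_cat => /orP[/eqP->//|/orP[]/mapP[z z_t ->]].
- by rewrite a_c addrC lerD // (le_trans c21 (le_trans c1_e (e_min _ z_t))).
- by rewrite a_c lerD2r (le_trans c1_e (e_min _ z_t)).
Qed.

End SplitSpectrum.

Lemma Qp_threshold (p : R) : 0 < p ->
  eig_asc (Qp Q p) 1 = 2 * m.+1%:R * p <-> p * m.+2%:R <= eig_asc Q 1.
Proof.
move=> p_gt0.
have [[t char_deflate]|nosplit] := pselect (splits (char_poly (deflate Q))).
  exact: (Qp_threshold_split char_deflate p_gt0).
(* Otherwise [eig_asc] takes its default value 0 on Q and on Qp Q p, and both
   sides of the equivalence are false. *)
have nosplit_Q : ~ splits (char_poly Q).
  move=> split_Q; apply/nosplit/(splits_dvdp (char_poly_monic _) _ split_Q).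
  by rewrite char_poly_Q dvdp_mulIr.
have nosplit_Qp : ~ splits (char_poly (Qp Q p)).
  move=> split_Qp; apply/nosplit/splits_char_poly_shift.
  apply: (splits_dvdp (char_poly_monic _) _ split_Qp); rewrite char_poly_Qp.
  exact: dvdp_trans (dvdp_mulIr 'X _) (dvdp_mulIl _ _).
rewrite !eig_asc_nosplit //.
have a_gt0 : 0 < 2 * m.+1%:R * p by rewrite !mulr_gt0.
have c_gt0 : 0 < p * m.+2%:R by rewrite mulr_gt0.
by split=> [a0|]; [move: a_gt0; rewrite -a0 ltxx | rewrite leNgt c_gt0].
Qed.

End Coupling.

Theorem mainTheorem5 (R : realType) (n : nat) (adj : rel 'I_n)
    (hn : (2 <= n)%N) (hsym : symmetric adj) (hirr : irreflexive adj) :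
  pstar (laplacian R adj) = eig_asc (laplacian R adj) 1 / n%:R.
Proof.
case: n adj hn hsym hirr => [|[|m]] adj // _ adj_sym adj_irr.
set Q := laplacian R adj.
have Q_ones : Q *m (const_mx 1 : 'cV_(1 + m.+1)) = 0 *: const_mx 1.
  by rewrite scale0r laplacian_mul_ones.
have Q_eig_ge0 : forall lam, root (char_poly Q) lam -> 0 <= lam.
  exact: laplacian_eig_ge0.
apply: sup_threshold => [|p p_gt0].
  by rewrite divr_ge0 // eig_asc_ge0.
by rewrite (Qp_threshold Q_ones Q_eig_ge0 p_gt0) ler_pdivlMr.
Qed.
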